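(* Let $L$ be an h-local C-lattice domain in which every element is a join of principal elements. If $a,b\in L\setminus\{0\}$ and $m$ is a maximal element of $L$, then $(a:b)_m=(a_m:b_m)$.
   Context: A multiplicative lattice is a complete lattice $(L,\le)$ with bottom $0$ and top $1$ which is also a commutative monoid with identity $1$ such that $a(\bigvee_\alpha b_\alpha)=\bigvee_\alpha(ab_\alpha)$ for all $a,b_\alpha\in L$. For $x,y\in L$, $(y:x)=\bigvee\{c\in L: cx\le y\}$. An element $c$ is compact if $c\le\bigvee S$ implies $c\le\bigvee T$ for some finite $T\subseteq S$. A C-lattice is a multiplicative lattice in which $1$ is compact, the product of two compact elements is compact, and every element is a join of compact elements; $L^*$ denotes its compact elements. A proper element $p\ne1$ is prime if $xy\le p$ implies $x\le p$ or $y\le p$; maximal elements are maximal in $L\setminus\{1\}$; $L$ is a domain if $0$ is prime. An element $x$ is principal if $y\wedge zx=((y:x)\wedge z)x$ and $y\vee(z:x)=((yx\vee z):x)$ for all $y,z\in L$. For $p$ prime and $x\in L$, $x_p=\bigvee\{c\in L^*: cs\le x \text{ for some } s\in L^*,\ s\not\le p\}$. $L$ has finite character if every nonzero element is below only finitely many maximal elements; $L$ is h-local if it has finite character and every nonzero prime element is below a unique maximal element. *)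

From Stdlib Require Import List.
Set Implicit Arguments.

Record MultLattice : Type := {
  carrier :> Type;
  le : carrier -> carrier -> Prop;
  sup : (carrier -> Prop) -> carrier;
  mul : carrier -> carrier -> carrier;
  zero : carrier;
  one : carrier;
  le_refl : forall x, le x x;
  le_trans : forall x y z, le x y -> le y z -> le x z;
  le_antisym : forall x y, le x y -> le y x -> x = y;
  sup_ub : forall (S : carrier -> Prop) x, S x -> le x (sup S);
  sup_least : forall (S : carrier -> Prop) y, (forall x, S x -> le x y) -> le (sup S) y;
  zero_le : forall x, le zero x;
  le_one : forall x, le x one;
  mulC : forall x y, mul x y = mul y x;
  mulA : forall x y z, mul x (mul y z) = mul (mul x y) z;
  mul1 : forall x, mul one x = x;
  mul_sup : forall a (S : carrier -> Prop),
      mul a (sup S) = sup (fun t => exists b, S b /\ t = mul a b)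
}.

Arguments le {m} _ _.
Arguments sup {m} _.
Arguments mul {m} _ _.

Section Defs.
Variable L : MultLattice.

Definition join2 (x y : L) : L := sup (fun t => t = x \/ t = y).
Definition meet2 (x y : L) : L := sup (fun t => le t x /\ le t y).

Definition colon (y x : L) : L := sup (fun c => le (mul c x) y).

Definition compact (c : L) : Prop :=
  forall S : L -> Prop, le c (sup S) ->
    exists T : list L, (forall t, In t T -> S t) /\ le c (sup (fun t => In t T)).

Definition C_lattice : Prop :=
  compact (one L) /\
  (forall c d, compact c -> compact d -> compact (mul c d)) /\
  (forall x, x = sup (fun c => compact c /\ le c x)).

Definition prime (p : L) : Prop :=
  p <> one L /\ forall x y, le (mul x y) p -> le x p \/ le y p.

Definition maximal (m : L) : Prop :=
  m <> one L /\ forall x, le m x -> x <> one L -> x = m.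

Definition domain : Prop := prime (zero L).

Definition principal (x : L) : Prop :=
  forall y z : L,
    meet2 y (mul z x) = mul (meet2 (colon y x) z) x /\
    join2 y (colon z x) = colon (join2 (mul y x) z) x.

(** x_p = \/ { c in L* | c s <= x for some s in L*, s not <= p } *)
Definition loc (x p : L) : L :=
  sup (fun c => compact c /\
       exists s, compact s /\ ~ le s p /\ le (mul c s) x).

Definition finite_character : Prop :=
  forall x : L, x <> zero L ->
    exists l : list L, forall m, maximal m -> le x m -> In m l.

Definition h_local : Prop :=
  finite_character /\
  forall p : L, prime p -> p <> zero L ->
    exists m, (maximal m /\ le p m) /\
      forall m', maximal m' /\ le p m' -> m' = m.

Definition principally_generated : Prop :=
  forall x : L, x = sup (fun c => principal c /\ le c x).

End Defs.

Arguments join2 {L} _ _.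
Arguments meet2 {L} _ _.
Arguments colon {L} _ _.
Arguments compact {L} _.
Arguments prime {L} _.
Arguments maximal {L} _.
Arguments principal {L} _.
Arguments loc {L} _ _.

(** The inclusion [(a:b)_m <= (a_m:b_m)] holds at every prime [m] of a
    C-lattice.  For the converse take a compact [c] with [c b_m <= a_m].
    h-locality yields a compact [s] not below [m] with [s <= a_n] for every
    maximal [n <> m]: for a single [n], Krull's separation of [a] from the
    products [s u] ([s] outside [m], [u] outside [n]) would otherwise produce a
    nonzero prime below both [m] and [n]; only finitely many [n] lie above [a],
    and [a_n = 1] for all others.  Then [s c b <= a_n] for every maximal [n],
    and an element is the meet of its localizations at maximal elements, so
    [s c b <= a] and [c <= (a:b)_m]. *)

From Stdlib Require Import List Classical ProofIrrelevance.
From mathcomp Require classical_sets boolp.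

Section MultLatticeTheory.

Context {L : MultLattice}.

Lemma mul_le_mono_l (z x y : L) : le x y -> le (mul z x) (mul z y).
Proof.
  intros Hxy.
  assert (Ey : y = sup (fun t => t = x \/ t = y)).
  { apply le_antisym.
    - apply sup_ub. right. reflexivity.
    - apply sup_least. intros t [-> | ->]; [exact Hxy | apply le_refl]. }
  rewrite Ey, mul_sup. apply sup_ub. exists x. split; [left |]; reflexivity.
Qed.

Lemma mul_le_mono (x y x' y' : L) : le x x' -> le y y' -> le (mul x y) (mul x' y').
Proof.
  intros Hx Hy. apply le_trans with (mul x y').
  - apply mul_le_mono_l. exact Hy.
  - rewrite (mulC _ x), (mulC _ x'). apply mul_le_mono_l. exact Hx.
Qed.

Lemma mul_le_l (z x : L) : le (mul z x) z.
Proof.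
  apply le_trans with (mul z (one L)).
  - apply mul_le_mono_l, le_one.
  - rewrite mulC, mul1. apply le_refl.
Qed.

Lemma mul_le_r (z x : L) : le (mul x z) z.
Proof. rewrite mulC. apply mul_le_l. Qed.

Lemma mulACA (a b c d : L) : mul (mul a b) (mul c d) = mul (mul a c) (mul b d).
Proof.
  rewrite <- mulA, (mulA _ b c d), (mulC _ b c), <- (mulA _ c b d), mulA.
  reflexivity.
Qed.

Lemma le_join2_l (x y : L) : le x (join2 x y).
Proof. apply sup_ub. left. reflexivity. Qed.

Lemma le_join2_r (x y : L) : le y (join2 x y).
Proof. apply sup_ub. right. reflexivity. Qed.

Lemma mul_join2_le (z x y w : L) :
  le (mul z x) w -> le (mul z y) w -> le (mul z (join2 x y)) w.
Proof.
  intros Hx Hy. unfold join2. rewrite mul_sup. apply sup_least.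
  intros t [u [[-> | ->] ->]]; assumption.
Qed.

Lemma mul_join2_join2_le (p x y : L) :
  le (mul x y) p -> le (mul (join2 p x) (join2 p y)) p.
Proof.
  intros Hxy. apply mul_join2_le; [apply mul_le_r |].
  rewrite mulC. apply mul_join2_le; [apply mul_le_r |].
  rewrite mulC. exact Hxy.
Qed.

Lemma colon_mul_le (y x : L) : le (mul (colon y x) x) y.
Proof.
  unfold colon. rewrite mulC, mul_sup. apply sup_least.
  intros t [c [Hc ->]]. rewrite mulC. exact Hc.
Qed.

Lemma le_colon (c y x : L) : le (mul c x) y -> le c (colon y x).
Proof. intros H. apply sup_ub. exact H. Qed.

Lemma one_not_le {m : L} : m <> one L -> ~ le (one L) m.
Proof. intros Hm H. apply Hm. apply le_antisym; [apply le_one | exact H]. Qed.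

Lemma prime_mul_not_le (p s t : L) :
  prime p -> ~ le s p -> ~ le t p -> ~ le (mul s t) p.
Proof. intros [_ Hp] Hs Ht Hst. destruct (Hp s t Hst); contradiction. Qed.

Lemma maximal_prime {m : L} : maximal m -> prime m.
Proof.
  intros [Hm1 Hm]. split; [exact Hm1 |].
  intros x y Hxy. destruct (classic (le x m)) as [Hx | Hx]; [left; exact Hx | right].
  assert (Hjoin : join2 m x = one L).
  { apply NNPP. intros Hne. apply Hx.
    rewrite <- (Hm (join2 m x) (le_join2_l m x) Hne). apply le_join2_r. }
  rewrite <- (mul1 L y), <- Hjoin, mulC. apply mul_join2_le.
  - apply mul_le_r.
  - rewrite mulC. exact Hxy.
Qed.

Lemma compact_le_sup_directed {c : L} (S : L -> Prop) :
  compact c -> (exists x, S x) ->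
  (forall x y, S x -> S y -> exists z, S z /\ le x z /\ le y z) ->
  le c (sup S) -> exists z, S z /\ le c z.
Proof.
  intros Hc [x0 Sx0] Hdir HcS.
  destruct (Hc S HcS) as [T [HT HcT]].
  assert (Hub : exists z, S z /\ forall t, In t T -> le t z).
  { clear HcT. induction T as [| t T IH].
    - exists x0. split; [exact Sx0 | intros t []].
    - destruct IH as [z [Sz Hz]].
      { intros u Hu. apply HT. right. exact Hu. }
      destruct (Hdir t z (HT t (or_introl eq_refl)) Sz) as [w [Sw [Htw Hzw]]].
      exists w. split; [exact Sw |].
      intros u [<- | Hu]; [exact Htw | eapply le_trans; [apply Hz, Hu | exact Hzw]]. }
  destruct Hub as [z [Sz Hz]]. exists z. split; [exact Sz |].
  eapply le_trans; [exact HcT |]. apply sup_least. exact Hz.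
Qed.

Lemma exists_maximal_of_chains (P : L -> Prop) :
  (forall C : L -> Prop, (forall x, C x -> P x) ->
     (forall x y, C x -> C y -> le x y \/ le y x) ->
     exists u, P u /\ forall x, C x -> le x u) ->
  exists p, P p /\ forall x, P x -> le p x -> x = p.
Proof.
  intros Hchain.
  set (R := fun u v : {x : L | P x} => boolp.asbool (le (proj1_sig u) (proj1_sig v))).
  destruct (@classical_sets.Zorn _ R) as [[p Pp] Hmax]; unfold R in *.
  - intros [x Px]. rewrite boolp.asboolE. apply le_refl.
  - intros [x Px] [y Py] [z Pz]. rewrite !boolp.asboolE. apply le_trans.
  - intros [x Px] [y Py]. rewrite !boolp.asboolE. simpl. intros Hxy Hyx.
    destruct (le_antisym _ _ _ Hxy Hyx). f_equal. apply proof_irrelevance.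
  - intros A HA.
    destruct (Hchain (fun x => exists Px : P x, A (exist P x Px))) as [u [Pu Hu]].
    + intros x [Px _]. exact Px.
    + intros x y [Px Ax] [Py Ay]. destruct (HA _ _ Ax Ay) as [H | H];
        rewrite boolp.asboolE in H; [left | right]; exact H.
    + exists (exist P u Pu). intros [x Px] Ax. rewrite boolp.asboolE.
      apply Hu. exists Px. exact Ax.
  - exists p. split; [exact Pp |]. intros x Px Hpx.
    assert (E := Hmax (exist P x Px)). rewrite boolp.asboolE in E.
    injection (E Hpx). auto.
Qed.

Definition avoids (S : L -> Prop) (x : L) : Prop := forall t, S t -> ~ le t x.

Section PrimeAvoidance.

Variables (S : L -> Prop) (a : L).
Hypothesis S_compact : forall t, S t -> compact t.
Hypothesis a_avoids : avoids S a.

Lemma exists_maximal_avoiding :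
  exists p, le a p /\ avoids S p /\ forall x, le p x -> avoids S x -> x = p.
Proof.
  destruct (exists_maximal_of_chains (fun x => le a x /\ avoids S x))
    as [p [[Hap Hp] Hmax]].
  - intros C HC Htot. set (U := fun x => x = a \/ C x).
    assert (U_directed : forall x y, U x -> U y -> exists z, U z /\ le x z /\ le y z).
    { intros x y [-> | Cx] [-> | Cy].
      - exists a. repeat split; [left; reflexivity | apply le_refl | apply le_refl].
      - exists y. repeat split; [right; exact Cy | apply HC, Cy | apply le_refl].
      - exists x. repeat split; [right; exact Cx | apply le_refl | apply HC, Cx].
      - destruct (Htot x y Cx Cy) as [Hxy | Hyx].
        + exists y. repeat split; [right; exact Cy | exact Hxy | apply le_refl].
        + exists x. repeat split; [right; exact Cx | apply le_refl | exact Hyx]. }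
    exists (sup U). repeat split.
    + apply sup_ub. left. reflexivity.
    + intros t St Ht.
      destruct (compact_le_sup_directed U (S_compact t St) (ex_intro U a (or_introl eq_refl))
                  U_directed Ht) as [z [[-> | Cz] Htz]].
      * exact (a_avoids t St Htz).
      * exact (proj2 (HC z Cz) t St Htz).
    + intros x Cx. apply sup_ub. right. exact Cx.
  - exists p. repeat split; [exact Hap | exact Hp |].
    intros x Hpx Hx. apply Hmax; [split; [eapply le_trans; eassumption | exact Hx] | exact Hpx].
Qed.

Lemma exists_prime_avoiding :
  S (one L) -> (forall s t, S s -> S t -> S (mul s t)) ->
  exists p, prime p /\ le a p /\ avoids S p.
Proof.
  intros S_one S_mul.
  destruct exists_maximal_avoiding as [p [Hap [Hp Hmax]]].
  assert (Hjoin : forall x, ~ le x p -> exists t, S t /\ le t (join2 p x)).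
  { intros x Hx. apply NNPP. intros Hno. apply Hx.
    rewrite <- (Hmax (join2 p x) (le_join2_l p x)).
    - apply le_join2_r.
    - intros t St Ht. apply Hno. exists t. split; assumption. }
  exists p. repeat split; [| | exact Hap | exact Hp].
  - intros E. apply (Hp _ S_one). rewrite E. apply le_refl.
  - intros x y Hxy. apply NNPP. intros Hn. apply not_or_and in Hn. destruct Hn as [Hx Hy].
    destruct (Hjoin x Hx) as [s [Ss Hs]]. destruct (Hjoin y Hy) as [t [St Ht]].
    apply (Hp _ (S_mul s t Ss St)).
    eapply le_trans; [apply mul_le_mono; eassumption |].
    apply mul_join2_join2_le. exact Hxy.
Qed.

End PrimeAvoidance.

Lemma exists_maximal_ge {x : L} :
  compact (one L) -> ~ le (one L) x -> exists m, maximal m /\ le x m.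
Proof.
  intros H1 Hx.
  destruct (exists_maximal_avoiding (fun t => t = one L) x)
    as [p [Hxp [Hp Hmax]]].
  - intros t ->. exact H1.
  - intros t ->. exact Hx.
  - exists p. repeat split; [| | exact Hxp].
    + intros E. apply (Hp (one L) eq_refl). rewrite E. apply le_refl.
    + intros y Hpy Hy. apply Hmax; [exact Hpy |]. intros t ->. apply one_not_le. exact Hy.
Qed.

Lemma le_loc_of_mul_le {c s x p : L} :
  compact c -> compact s -> ~ le s p -> le (mul c s) x -> le c (loc x p).
Proof. intros Hc Hs Hsp Hcs. apply sup_ub. split; [exact Hc |]. exists s. auto. Qed.

Section CLattice.

Hypothesis HC : C_lattice L.

Let compact_one : compact (one L) := proj1 HC.
Let compact_mul : forall {c d : L}, compact c -> compact d -> compact (mul c d)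
  := proj1 (proj2 HC).
Let sup_compact_le : forall x : L, x = sup (fun c => compact c /\ le c x)
  := proj2 (proj2 HC).

Lemma exists_compact_le_not_le {x y : L} :
  ~ le x y -> exists e, compact e /\ le e x /\ ~ le e y.
Proof.
  intros Hxy. apply NNPP. intros Hno. apply Hxy.
  rewrite (sup_compact_le x). apply sup_least. intros e [He Hex].
  apply NNPP. intros Hey. apply Hno. exists e. repeat split; assumption.
Qed.

Lemma le_loc (x : L) {p : L} : prime p -> le x (loc x p).
Proof.
  intros [Hp _]. rewrite (sup_compact_le x) at 1. apply sup_least. intros e [He Hex].
  apply (le_loc_of_mul_le He compact_one (one_not_le Hp)).
  rewrite mulC, mul1. exact Hex.
Qed.

Lemma one_le_loc {a p : L} : ~ le a p -> le (one L) (loc a p).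
Proof.
  intros Hap. destruct (exists_compact_le_not_le Hap) as [e [He [Hea Hep]]].
  apply (le_loc_of_mul_le compact_one He Hep). rewrite mul1. exact Hea.
Qed.

Lemma compact_le_loc {a p d : L} :
  prime p -> compact d -> le d (loc a p) ->
  exists t, compact t /\ ~ le t p /\ le (mul d t) a.
Proof.
  intros Hp Hd Hdl.
  set (D := fun x => exists t, compact t /\ ~ le t p /\ le (mul x t) a).
  assert (D_directed : forall x y, D x -> D y -> exists z, D z /\ le x z /\ le y z).
  { intros x y [s [Hs [Hsp Hxs]]] [t [Ht [Htp Hyt]]].
    exists (join2 x y). repeat split; [| apply le_join2_l | apply le_join2_r].
    exists (mul s t). repeat split; [apply compact_mul; assumption
                                     | apply prime_mul_not_le; assumption |].
    rewrite mulC. apply mul_join2_le.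
    - rewrite mulC. eapply le_trans; [apply mul_le_mono_l, mul_le_l | exact Hxs].
    - rewrite mulC. eapply le_trans; [apply mul_le_mono_l, mul_le_r | exact Hyt]. }
  assert (D_zero : D (zero L)).
  { exists (one L). repeat split; [exact compact_one | apply one_not_le, Hp |].
    rewrite mulC, mul1. apply zero_le. }
  assert (loc_le_sup : le (loc a p) (sup D)).
  { apply sup_least. intros c [_ [s [Hs [Hsp Hcs]]]]. apply sup_ub. exists s. auto. }
  destruct (compact_le_sup_directed D Hd (ex_intro D _ D_zero) D_directed
              (le_trans _ _ _ _ Hdl loc_le_sup)) as [z [[t [Ht [Htp Hzt]]] Hdz]].
  exists t. repeat split; [exact Ht | exact Htp |].
  eapply le_trans; [apply mul_le_mono; [exact Hdz | apply le_refl] | exact Hzt].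
Qed.

Lemma colon_loc_le (a b : L) {p : L} :
  prime p -> le (loc (colon a b) p) (colon (loc a p) (loc b p)).
Proof.
  intros Hp. apply sup_least. intros c [Hc [s [Hs [Hsp Hcs]]]].
  apply le_colon. unfold loc at 1. rewrite mul_sup. apply sup_least.
  intros t [d [[Hd [u [Hu [Hup Hdu]]]] ->]].
  apply (le_loc_of_mul_le (compact_mul Hc Hd) (compact_mul Hs Hu)).
  - apply prime_mul_not_le; assumption.
  - rewrite mulACA. eapply le_trans; [apply mul_le_mono; eassumption | apply colon_mul_le].
Qed.

Lemma le_of_forall_le_loc {x a : L} :
  (forall n, maximal n -> le x (loc a n)) -> le x a.
Proof.
  intros Hx. apply NNPP. intros Hxa.
  destruct (exists_compact_le_not_le Hxa) as [d [Hd [Hdx Hda]]].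
  assert (Hcolon : ~ le (one L) (colon a d)).
  { intros H. apply Hda. rewrite <- (mul1 L d).
    eapply le_trans; [apply mul_le_mono; [exact H | apply le_refl] | apply colon_mul_le]. }
  destruct (exists_maximal_ge compact_one Hcolon) as [n [Hn Hcn]].
  destruct (compact_le_loc (maximal_prime Hn) Hd (le_trans _ _ _ _ Hdx (Hx n Hn)))
    as [t [Ht [Htn Hdt]]].
  apply Htn. eapply le_trans; [| exact Hcn]. apply le_colon. rewrite mulC. exact Hdt.
Qed.

Section HLocal.

Hypothesis Hh : h_local L.

Lemma exists_compact_le_loc {a m n : L} :
  a <> zero L -> maximal m -> maximal n -> n <> m ->
  exists s, compact s /\ ~ le s m /\ le s (loc a n).
Proof.
  intros Ha Hm Hn Hnm. apply NNPP. intros Hno.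
  set (S := fun t => exists s u,
              compact s /\ compact u /\ ~ le s m /\ ~ le u n /\ t = mul s u).
  assert (Pm := maximal_prime Hm). assert (Pn := maximal_prime Hn).
  destruct (@exists_prime_avoiding S a) as [p [Pp [Hap Hp]]].
  - intros t [s [u [Hs [Hu [_ [_ ->]]]]]]. apply compact_mul; assumption.
  - intros t [s [u [Hs [Hu [Hsm [Hun ->]]]]]] Hsu. apply Hno.
    exists s. repeat split; [exact Hs | exact Hsm |]. exact (le_loc_of_mul_le Hs Hu Hun Hsu).
  - exists (one L), (one L). rewrite mul1.
    repeat split; [exact compact_one | exact compact_one
                  | apply one_not_le, Pm | apply one_not_le, Pn].
  - intros t t' [s [u [Hs [Hu [Hsm [Hun ->]]]]]] [s' [u' [Hs' [Hu' [Hsm' [Hun' ->]]]]]].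
    exists (mul s s'), (mul u u').
    repeat split; auto using prime_mul_not_le. apply mulACA.
  - assert (Hpm : le p m).
    { apply NNPP. intros Hpm. destruct (exists_compact_le_not_le Hpm) as [e [He [Hep Hem]]].
      apply (Hp e); [| exact Hep]. exists e, (one L). rewrite mulC, mul1.
      repeat split; [exact He | exact compact_one | exact Hem | apply one_not_le, Pn]. }
    assert (Hpn : le p n).
    { apply NNPP. intros Hpn. destruct (exists_compact_le_not_le Hpn) as [e [He [Hep Hen]]].
      apply (Hp e); [| exact Hep]. exists (one L), e. rewrite mul1.
      repeat split; [exact compact_one | exact He | apply one_not_le, Pm | exact Hen]. }
    assert (Hp0 : p <> zero L).
    { intros E. apply Ha. apply le_antisym; [rewrite <- E; exact Hap | apply zero_le]. }
    destruct (proj2 Hh p Pp Hp0) as [m0 [_ Huniq]].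
    apply Hnm. rewrite (Huniq m), (Huniq n); auto.
Qed.

Lemma exists_compact_le_loc_all {a m : L} :
  a <> zero L -> maximal m ->
  exists s, compact s /\ ~ le s m /\ forall n, maximal n -> n <> m -> le s (loc a n).
Proof.
  intros Ha Hm. destruct (proj1 Hh a Ha) as [l Hl].
  assert (Hlist : exists s, compact s /\ ~ le s m /\
            forall n, In n l -> maximal n -> n <> m -> le s (loc a n)).
  { clear Hl. induction l as [| n l IH].
    - exists (one L). repeat split; [exact compact_one | apply one_not_le, Hm | ].
      intros n [].
    - destruct IH as [s [Hs [Hsm Hsl]]].
      destruct (classic (maximal n /\ n <> m)) as [[Hn Hnm] | Hno].
      + destruct (exists_compact_le_loc Ha Hm Hn Hnm) as [u [Hu [Hum Hun]]].
        exists (mul s u). repeat split.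
        * apply compact_mul; assumption.
        * apply prime_mul_not_le; [exact (maximal_prime Hm) | exact Hsm | exact Hum].
        * intros k [<- | Hk] Hk1 Hk2.
          -- eapply le_trans; [apply mul_le_r | exact Hun].
          -- eapply le_trans; [apply mul_le_l | exact (Hsl k Hk Hk1 Hk2)].
      + exists s. repeat split; [exact Hs | exact Hsm |].
        intros k [<- | Hk] Hk1 Hk2; [exfalso; auto | exact (Hsl k Hk Hk1 Hk2)]. }
  destruct Hlist as [s [Hs [Hsm Hsl]]].
  exists s. repeat split; [exact Hs | exact Hsm |]. intros n Hn Hnm.
  destruct (classic (le a n)) as [Han | Han].
  - exact (Hsl n (Hl n Hn Han) Hn Hnm).
  - eapply le_trans; [apply le_one | exact (one_le_loc Han)].
Qed.

End HLocal.

End CLattice.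

End MultLatticeTheory.

Theorem proposition3p11 (L : MultLattice) :
  C_lattice L -> domain L -> h_local L -> principally_generated L ->
  forall a b m : L, a <> zero L -> b <> zero L -> maximal m ->
    loc (colon a b) m = colon (loc a m) (loc b m).
Proof.
  intros HC _ Hh _ a b m Ha _ Hm.
  assert (Pm := maximal_prime Hm).
  apply le_antisym; [exact (colon_loc_le HC a b Pm) |].
  rewrite (proj2 (proj2 HC) (colon (loc a m) (loc b m))).
  apply sup_least. intros c [Hc Hcc].
  destruct (exists_compact_le_loc_all HC Hh Ha Hm) as [s [Hs [Hsm Hsn]]].
  apply (le_loc_of_mul_le Hc Hs Hsm). apply le_colon.
  rewrite (mulC _ c s), <- mulA. apply (le_of_forall_le_loc HC). intros n Hn.
  destruct (classic (n = m)) as [-> | Hnm].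
  - eapply le_trans; [apply mul_le_r |].
    eapply le_trans; [apply mul_le_mono; [exact Hcc | apply (le_loc HC b Pm)] |].
    apply colon_mul_le.
  - eapply le_trans; [apply mul_le_l | exact (Hsn n Hn Hnm)].
Qed.
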